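(* Let $(G,F)$ be a functor from a poset $\mathcal{A}$ to $\mathbf{Split}$. Then the left coupling $L$ extends uniquely to a functor $\mathcal{A}_1\to\mathbf{Mod}$, the right coupling $R$ extends uniquely to a presheaf $\mathcal{A}_1^{op}\to\mathbf{Mod}$, and for all $(\beta,b)\le(\alpha,a)$ in $\mathcal{A}_1$ one has $R^{\alpha a}_{\beta b}L^{\beta b}_{\alpha a}=\mathrm{id}$; i.e. $(L,R)$ is a functor from $\mathcal{A}_1$ to $\mathbf{Split}$.
   Context: A functor from $\mathcal{A}$ to $\mathbf{Split}$ is a pair $(G,F)$ with $G:\mathcal{A}\to\mathbf{Mod}$ a functor (maps $G^b_a$, $b\le a$), $F$ a presheaf on $\mathcal{A}$ (maps $F^a_b$) with $G(a)=F(a)$ and $F^a_bG^b_a=\mathrm{id}$ for $b\le a$. $\mathcal{A}_1=\{(\alpha,a): a\le\alpha\}\subseteq\mathcal{A}\times\mathcal{A}$ with product order. Put $L(\alpha,a)=R(\alpha,a)=\operatorname{im}G^a_\alpha\subseteq G(\alpha)$. For $b\le a\le\alpha$: $L^{\alpha b}_{\alpha a}$ is the inclusion $\operatorname{im}G^b_\alpha\subseteq\operatorname{im}G^a_\alpha$, and $R^{\alpha a}_{\alpha b}:\operatorname{im}G^a_\alpha\to\operatorname{im}G^b_\alpha$ is the unique map with $R^{\alpha a}_{\alpha b}G^a_\alpha=G^b_\alpha F^a_b$. For $a\le\beta\le\alpha$: $L^{\beta a}_{\alpha a}:\operatorname{im}G^a_\beta\to\operatorname{im}G^a_\alpha$ is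 the restriction of $G^\beta_\alpha$ and $R^{\alpha a}_{\beta a}:\operatorname{im}G^a_\alpha\to\operatorname{im}G^a_\beta$ the restriction of $F^\alpha_\beta$. A functor from $\mathcal{A}_1$ to $\mathbf{Split}$ is defined in the same way as for $\mathcal{A}$. *)

From HB Require Import structures.
From mathcomp Require Import all_boot all_order all_algebra.
Unset Printing Implicit Defensive.
Import Order.TTheory GRing.Theory.
Local Open Scope ring_scope.

(* Conventions.
   - The poset A is a porderType; R is a ring and M : A -> lmodType R gives the
     modules G(a) = F(a).
   - A family of maps indexed by pairs of A is a total function
     m : forall x y : A, M x -> M y; only its values on comparable pairs
     matter (G b a is G^b_a : G(b) -> G(a) for b <= a; F a b is F^a_b for
     b <= a).
   - For (alpha,a) in A_1 (a <= alpha), L(alpha,a) = R(alpha,a) = im G^a_alpha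
     is represented as the predicate [inL G a alpha] on M alpha; a linear map
     between two such submodules is represented by a map between the ambient
     modules, constrained (and compared) only on the source submodule. *)

Section Defs.
Context {d : Order.disp_t} {A : porderType d} {R : pzRingType}.
Context {M : A -> lmodType R}.

Definition linear_map {x y : A} (f : M x -> M y) : Prop :=
  (forall u v, f (u + v) = f u + f v) /\ (forall (k : R) u, f (k *: u) = k *: f u).

Definition is_functor (G : forall x y : A, M x -> M y) : Prop :=
  [/\ forall b a, (b <= a)%O -> linear_map (G b a),
      forall a u, G a a u = u &
      forall c b a, (c <= b)%O -> (b <= a)%O -> forall u, G b a (G c b u) = G c a u].

Definition is_presheaf (F : forall x y : A, M x -> M y) : Prop :=
  [/\ forall b a, (b <= a)%O -> linear_map (F a b),
      forall a u, F a a u = u &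
      forall c b a, (c <= b)%O -> (b <= a)%O -> forall u, F b c (F a b u) = F a c u].

Definition is_split_functor (G F : forall x y : A, M x -> M y) : Prop :=
  [/\ is_functor G, is_presheaf F &
      forall b a, (b <= a)%O -> forall u, F a b (G b a u) = u].

Definition inL (G : forall x y : A, M x -> M y) (a alpha : A) (x : M alpha) : Prop :=
  exists y : M a, x = G a alpha y.

Definition linear_on (G : forall x y : A, M x -> M y) (b : A) {beta alpha : A}
  (f : M beta -> M alpha) : Prop :=
  (forall u v, inL G b beta u -> inL G b beta v -> f (u + v) = f u + f v) /\
  (forall (k : R) u, inL G b beta u -> f (k *: u) = k *: f u).

(* Lx beta b alpha a : L(beta,b) -> L(alpha,a) for (beta,b) <= (alpha,a) in A_1.
   [is_L_extension G Lx]: Lx is a functor A_1 -> Mod with values L extending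
   the given vertical (inclusion) and horizontal (restriction of G) maps. *)
Definition is_L_extension (G : forall x y : A, M x -> M y)
  (Lx : forall beta b alpha a : A, M beta -> M alpha) : Prop :=
  [/\ (forall beta b alpha a, (b <= beta)%O -> (a <= alpha)%O ->
         (beta <= alpha)%O -> (b <= a)%O ->
         (forall x, inL G b beta x -> inL G a alpha (Lx beta b alpha a x)) /\
         linear_on G b (Lx beta b alpha a)),
      (forall alpha a, (a <= alpha)%O -> forall x, inL G a alpha x ->
         Lx alpha a alpha a x = x),
      (forall gamma c beta b alpha a, (c <= gamma)%O -> (b <= beta)%O ->
         (a <= alpha)%O -> (gamma <= beta)%O -> (c <= b)%O ->
         (beta <= alpha)%O -> (b <= a)%O ->
         forall x, inL G c gamma x ->
         Lx beta b alpha a (Lx gamma c beta b x) = Lx gamma c alpha a x),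
      (forall alpha a b, (b <= a)%O -> (a <= alpha)%O ->
         forall x, inL G b alpha x -> Lx alpha b alpha a x = x) &
      (forall alpha beta a, (a <= beta)%O -> (beta <= alpha)%O ->
         forall x, inL G a beta x -> Lx beta a alpha a x = G beta alpha x)].

(* Rx alpha a beta b : R(alpha,a) -> R(beta,b) for (beta,b) <= (alpha,a) in A_1.
   [is_R_extension G F Rx]: Rx is a presheaf A_1^op -> Mod with values R
   extending the given vertical maps (R G^a_alpha = G^b_alpha F^a_b) and
   horizontal maps (restriction of F^alpha_beta). *)
Definition is_R_extension (G F : forall x y : A, M x -> M y)
  (Rx : forall alpha a beta b : A, M alpha -> M beta) : Prop :=
  [/\ (forall beta b alpha a, (b <= beta)%O -> (a <= alpha)%O ->
         (beta <= alpha)%O -> (b <= a)%O ->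
         (forall x, inL G a alpha x -> inL G b beta (Rx alpha a beta b x)) /\
         linear_on G a (Rx alpha a beta b)),
      (forall alpha a, (a <= alpha)%O -> forall x, inL G a alpha x ->
         Rx alpha a alpha a x = x),
      (forall gamma c beta b alpha a, (c <= gamma)%O -> (b <= beta)%O ->
         (a <= alpha)%O -> (gamma <= beta)%O -> (c <= b)%O ->
         (beta <= alpha)%O -> (b <= a)%O ->
         forall x, inL G a alpha x ->
         Rx beta b gamma c (Rx alpha a beta b x) = Rx alpha a gamma c x),
      (forall alpha a b, (b <= a)%O -> (a <= alpha)%O ->
         forall y : M a, Rx alpha a alpha b (G a alpha y) = G b alpha (F a b y)) &
      (forall alpha beta a, (a <= beta)%O -> (beta <= alpha)%O ->
         forall x, inL G a alpha x -> Rx alpha a beta a x = F alpha beta x)].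

End Defs.

From HB Require Import structures.
From mathcomp Require Import all_boot all_order all_algebra.
Import Order.TTheory.

(* Both couplings are given by explicit formulas on the ambient modules:
     L^{beta b}_{alpha a} x := G^beta_alpha x,
     R^{alpha a}_{beta b} x := G^b_beta (F^a_b (F^alpha_a x)).
   On the image im G^a_alpha the formula for R simplifies, by the splitting
   identity F G = id, to R (G^a_alpha y) = G^b_beta (F^a_b y); from this and
   the functor/presheaf laws of G and F every required identity follows.
   Uniqueness holds because every arrow (beta,b) <= (alpha,a) of A_1 factors
   as the horizontal arrow (beta,b) <= (alpha,b) followed by the vertical
   arrow (alpha,b) <= (alpha,a), on which any extension is prescribed. *)

Section Couplings.
Context {d : Order.disp_t} {A : porderType d} {R : pzRingType}.
Context {M : A -> lmodType R}.
Variables G F : forall x y : A, M x -> M y.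

Definition Lcan (beta b alpha a : A) (x : M beta) : M alpha := G beta alpha x.

Definition Rcan (alpha a beta b : A) (x : M alpha) : M beta :=
  G b beta (F a b (F alpha a x)).

(* Any arrow of A_1 is a horizontal arrow followed by a vertical one, so a
   functor on A_1 is determined by its values on these two kinds of arrows. *)
Lemma L_extension_factor {Lx : forall beta b alpha a : A, M beta -> M alpha} :
  is_L_extension G Lx ->
  forall beta b alpha a, (b <= beta)%O -> (a <= alpha)%O ->
    (beta <= alpha)%O -> (b <= a)%O ->
    forall x, inL G b beta x ->
    Lx beta b alpha a x = Lx alpha b alpha a (Lx beta b alpha b x).
Proof.
move=> [_ _ Lcomp _ _] beta b alpha a hb ha hba hab x hx.
by rewrite (Lcomp beta b alpha b alpha a) // (le_trans hb hba).
Qed.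

Lemma R_extension_factor {Rx : forall alpha a beta b : A, M alpha -> M beta} :
  is_R_extension G F Rx ->
  forall beta b alpha a, (b <= beta)%O -> (a <= alpha)%O ->
    (beta <= alpha)%O -> (b <= a)%O ->
    forall x, inL G a alpha x ->
    Rx alpha a beta b x = Rx alpha b beta b (Rx alpha a alpha b x).
Proof.
move=> [_ _ Rcomp _ _] beta b alpha a hb ha hba hab x hx.
by rewrite (Rcomp beta b alpha b alpha a) // (le_trans hb hba).
Qed.

Hypothesis G_functor : is_functor G.
Hypothesis F_presheaf : is_presheaf F.
Hypothesis FG_retract : forall b a, (b <= a)%O -> forall u, F a b (G b a u) = u.

Lemma F_after_G a beta alpha (y : M a) : (a <= beta)%O -> (beta <= alpha)%O ->
  F alpha beta (G a alpha y) = G a beta y.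
Proof.
case: G_functor => _ _ Gcomp hab hba.
by rewrite -(Gcomp a beta alpha hab hba) FG_retract.
Qed.

Lemma inL_G {a alpha beta} {x : M alpha} : (a <= alpha)%O -> (alpha <= beta)%O ->
  inL G a alpha x -> inL G a beta (G alpha beta x).
Proof.
case: G_functor => _ _ Gcomp ha hab [y ->].
by exists y; rewrite Gcomp.
Qed.

Lemma Rcan_image alpha a beta b (y : M a) : (a <= alpha)%O ->
  Rcan alpha a beta b (G a alpha y) = G b beta (F a b y).
Proof. by move=> ha; rewrite /Rcan FG_retract. Qed.

Lemma Lcan_is_L_extension : is_L_extension G Lcan.
Proof.
case: G_functor => Glin Gid Gcomp; split; rewrite /Lcan.
- move=> beta b alpha a hb ha hba hab; split.
    move=> x [y ->]; exists (G b a y).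
    by rewrite (Gcomp _ _ _ hb hba) (Gcomp _ _ _ hab ha).
  by have [Gadd Gscale] := Glin _ _ hba; split=> *; [exact: Gadd|exact: Gscale].
- by move=> *; rewrite Gid.
- by move=> gamma c beta b alpha a _ _ _ hgb _ hba *; rewrite Gcomp.
- by move=> *; rewrite Gid.
- by [].
Qed.

Lemma L_extension_unique (Lx : forall beta b alpha a : A, M beta -> M alpha) :
  is_L_extension G Lx ->
  forall beta b alpha a, (b <= beta)%O -> (a <= alpha)%O ->
    (beta <= alpha)%O -> (b <= a)%O ->
    forall x, inL G b beta x -> Lx beta b alpha a x = Lcan beta b alpha a x.
Proof.
move=> Lext beta b alpha a hb ha hba hab x hx.
rewrite (L_extension_factor Lext) //.
case: Lext => _ _ _ Lvert Lhor.
by rewrite Lhor // Lvert //; apply: inL_G hb hba hx.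
Qed.

Lemma Rcan_is_R_extension : is_R_extension G F Rcan.
Proof.
case: G_functor => Glin _ _; case: F_presheaf => Flin Fid Fcomp; split.
- move=> beta b alpha a hb ha hba hab; split.
    by move=> x _; exists (F a b (F alpha a x)).
  have [Gadd Gscale] := Glin _ _ hb; have [Fadd Fscale] := Flin _ _ hab.
  have [Fadd' Fscale'] := Flin _ _ ha.
  by split=> *; rewrite /Rcan ?Fadd' ?Fadd ?Gadd ?Fscale' ?Fscale ?Gscale.
- by move=> alpha a ha x [y ->]; rewrite Rcan_image // Fid.
- move=> gamma c beta b alpha a hc hb ha hgb hcb hba hab x [y ->].
  by rewrite !Rcan_image // Fcomp.
- by move=> alpha a b hab ha y; rewrite Rcan_image.
- move=> alpha beta a ha hba x [y ->].
  by rewrite Rcan_image ?Fid ?F_after_G // (le_trans ha hba).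
Qed.

Lemma R_extension_unique (Rx : forall alpha a beta b : A, M alpha -> M beta) :
  is_R_extension G F Rx ->
  forall beta b alpha a, (b <= beta)%O -> (a <= alpha)%O ->
    (beta <= alpha)%O -> (b <= a)%O ->
    forall x, inL G a alpha x -> Rx alpha a beta b x = Rcan alpha a beta b x.
Proof.
move=> Rext beta b alpha a hb ha hba hab x hx.
rewrite (R_extension_factor Rext) //; case: hx => y ->.
case: Rext => _ _ _ Rvert Rhor.
have hbalpha : (b <= alpha)%O := le_trans hb hba.
by rewrite Rvert // Rhor ?F_after_G ?Rcan_image //; exists (F a b y).
Qed.

Lemma Rcan_Lcan beta b alpha a : (b <= beta)%O -> (a <= alpha)%O ->
  (beta <= alpha)%O -> (b <= a)%O ->
  forall x, inL G b beta x -> Rcan alpha a beta b (Lcan beta b alpha a x) = x.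
Proof.
case: G_functor => _ _ Gcomp hb ha hba hab x [y ->].
by rewrite /Lcan (Gcomp _ _ _ hb hba) -(Gcomp _ _ _ hab ha) Rcan_image // FG_retract.
Qed.

End Couplings.

Theorem mainTheorem15 (d : Order.disp_t) (A : porderType d) (R : pzRingType)
  (M : A -> lmodType R) (G F : forall x y : A, M x -> M y) :
  is_split_functor G F ->
  exists (Lx : forall beta b alpha a : A, M beta -> M alpha)
         (Rx : forall alpha a beta b : A, M alpha -> M beta),
  [/\ is_L_extension G Lx,
      (forall Lx' : forall beta b alpha a : A, M beta -> M alpha,
         is_L_extension G Lx' ->
         forall beta b alpha a, (b <= beta)%O -> (a <= alpha)%O ->
           (beta <= alpha)%O -> (b <= a)%O ->
           forall x, inL G b beta x -> Lx' beta b alpha a x = Lx beta b alpha a x),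
      is_R_extension G F Rx,
      (forall Rx' : forall alpha a beta b : A, M alpha -> M beta,
         is_R_extension G F Rx' ->
         forall beta b alpha a, (b <= beta)%O -> (a <= alpha)%O ->
           (beta <= alpha)%O -> (b <= a)%O ->
           forall x, inL G a alpha x -> Rx' alpha a beta b x = Rx alpha a beta b x) &
      (forall beta b alpha a, (b <= beta)%O -> (a <= alpha)%O ->
         (beta <= alpha)%O -> (b <= a)%O ->
         forall x, inL G b beta x -> Rx alpha a beta b (Lx beta b alpha a x) = x)].
Proof.
move=> [Gfun Fpre FG]; exists (Lcan G), (Rcan G F); split.
- exact: Lcan_is_L_extension.
- exact: L_extension_unique.
- exact: Rcan_is_R_extension.
- exact: R_extension_unique.
- exact: Rcan_Lcan.
Qed.
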